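(* Define real sequences $(x_n)$, $(y_n)$ by, for $n\ge 0$: $x_{4n+1}=0$, $x_{4n+2}=3^{-(n+1)}$, $x_{4n+3}=2\cdot3^{-(n+1)}$, $x_{4n+4}=9\cdot 3^{-(n+1)}$, and $y_{4n+1}=6^{-(n+1)}$, $y_{4n+2}=y_{4n+3}=y_{4n+4}=-6^{-(n+1)}$. Let $E=E(x_n,y_n)\subset\mathbb R^2$. Then: (a) $E_0=S(\{0,1,2,9\},(3^{-n})_n)$; (b) $E$ has empty interior in $\mathbb R^2$; (c) for every $t\in(0,\tfrac98)$ and every $\varepsilon>0$, the open ball $B((t,0),\varepsilon)$ contains a point $p$ such that $\{p\}$ is a connected component of $E$.
   Context: For an absolutely convergent series $\sum_n v_n$ in $\mathbb R^2$, its achievement set is $E(v_n)=\{\sum_{n=1}^\infty \varepsilon_n v_n : (\varepsilon_n)\in\{0,1\}^{\mathbb N}\}$; $E(x_n,y_n)$ denotes the achievement set of $((x_n,y_n))_n$. For $A\subset\mathbb R^2$, $A_0=\{s\in\mathbb R:(s,0)\in A\}$. For a finite $P\subset\mathbb R$ and a sequence $(a_n)$, $S(P,a)=\{\sum_{n=1}^\infty \varepsilon_n a_n : (\varepsilon_n)\in P^{\mathbb N}\}$. *)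

From mathcomp Require Import all_boot all_order all_algebra.
From mathcomp Require Import all_classical all_reals all_analysis.
Set Implicit Arguments. Unset Strict Implicit. Unset Printing Implicit Defensive.
Import Order.TTheory GRing.Theory Num.Theory.
Import numFieldNormedType.Exports.
Local Open Scope classical_set_scope.
Local Open Scope ring_scope.

(* Sequences are 0-indexed: index k here corresponds to index k+1 in the paper. *)

(* Achievement set E(x_n, y_n) in R^2 = R * R:
   all sums  sum_k eps_k (x_k, y_k)  with eps in {0,1}^N
   (convergence in R^2 = convergence of both coordinates). *)
Definition achievement2 (R : realType) (x y : nat -> R) : set (R * R) :=
  [set p | exists eps : nat -> bool,
      (series (fun k => (eps k)%:R * x k) @ \oo --> p.1) /\
      (series (fun k => (eps k)%:R * y k) @ \oo --> p.2)].

Definition slice0 (R : realType) (A : set (R * R)) : set R :=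
  [set s | A (s, 0)].

Definition Sset (R : realType) (P : set R) (a : nat -> R) : set R :=
  [set s | exists eps : nat -> R, (forall k, P (eps k)) /\
      series (fun k => eps k * a k) @ \oo --> s].

(* x_{4n+1}=0, x_{4n+2}=3^{-(n+1)}, x_{4n+3}=2*3^{-(n+1)}, x_{4n+4}=9*3^{-(n+1)}
   (paper index 4n+1+r  <->  our index 4n+r) *)
Definition xseq (R : realType) (k : nat) : R :=
  let n := (k %/ 4)%N in
  let c : R := (3%:R ^+ n.+1)^-1 in
  match (k %% 4)%N with
  | 0%N => 0
  | 1%N => c
  | 2%N => 2%:R * c
  | _ => 9%:R * c
  end.

Definition yseq (R : realType) (k : nat) : R :=
  let n := (k %/ 4)%N in
  let c : R := (6%:R ^+ n.+1)^-1 in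
  match (k %% 4)%N with
  | 0%N => c
  | _ => - c
  end.

Definition pow3inv (R : realType) (k : nat) : R := (3%:R ^+ k.+1)^-1.

Definition eball (R : realType) (c : R * R) (e : R) : set (R * R) :=
  [set p | (p.1 - c.1) ^+ 2 + (p.2 - c.2) ^+ 2 < e ^+ 2].

From mathcomp Require Import all_boot all_order all_algebra.
From mathcomp Require Import all_classical all_reals all_analysis.
From mathcomp Require Import zify ring lra.
Import Order.TTheory GRing.Theory Num.Theory.
Import numFieldNormedType.Exports.
Local Open Scope classical_set_scope.
Local Open Scope ring_scope.

(* Group the terms in blocks of four: block n contributes
   (d_n / 3^(n+1), b_n / 6^(n+1)) with d_n = e_1 + 2 e_2 + 9 e_3 and
   b_n = e_0 - e_1 - e_2 - e_3 in [-3, 1], where e_0..e_3 are the block's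
   choices.  A base-6 expansion with digits in [-3, 1] has all its tails in
   [-3/5, 1/5]; hence the second coordinate Y determines every b_n, and the
   fractional part of Y 6^K is never 3/10, so the second coordinates of E
   contain no interval.  This gives (b), and since Y = 0 forces b = 0, where
   the only possible d_n are 0, 1, 2, 9, also (a).  For (c), expand t greedily
   with digits in {0, 1, 2, 9} up to some N and then take b_n = 1 (which
   forces d_n = 0) for n >= N: on the component of this point Y, hence every
   b_n, is constant, so the first coordinate lies in 3^-N Z, and the component
   is a single point. *)

Lemma series0 (V : zmodType) (u : nat -> V) : series u 0 = 0.
Proof. by rewrite seriesEord /= big_ord0. Qed.

Lemma divn_4MD n r : (r < 4)%N -> ((4 * n + r)%N %/ 4 = n)%N.
Proof. by move=> r4; rewrite mulnC divnMDl // divn_small ?addn0. Qed.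

Lemma modn_4MD n r : (r < 4)%N -> ((4 * n + r)%N %% 4 = r)%N.
Proof. by move=> r4; rewrite mulnC modnMDl modn_small. Qed.

Section AchievementSet.
Variable R : realType.
Implicit Types (eps : nat -> bool) (k m n : nat).

Lemma intr_norm_lt1 (w : int) : `|w%:~R : R| < 1 -> w = 0.
Proof. by rewrite -intr_norm -[1]/(1%:~R : R) ltr_int; lia. Qed.

Lemma exists_natpow_gt (x : R) p : (1 < p)%N -> exists K, x < p%:R ^+ K.
Proof.
move=> p_gt1; exists (Num.Def.archi_bound `|x|); apply: le_lt_trans (ler_norm x) _.
apply: lt_le_trans (archi_boundP (normr_ge0 x)) _.
by rewrite -natrX ler_nat ltnW // ltn_expl.
Qed.

Definition interval_free (S : set R) :=
  forall a c, S a -> S c -> a < c -> exists2 x, a < x < c & ~ S x.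

Lemma interval_free_subsingleton {S A : set R} : interval_free S -> is_interval A ->
  A `<=` S -> forall a c, A a -> A c -> a = c.
Proof.
move=> S_free A_itv AS.
suff lt_absurd a c : A a -> A c -> a < c -> False.
  by move=> a c Aa Ac; case: (ltgtP a c) => // [/(lt_absurd _ _ Aa Ac)|/(lt_absurd _ _ Ac Aa)].
move=> Aa Ac ac; have [x /andP[ax xc]] := S_free a c (AS _ Aa) (AS _ Ac) ac; apply.
by apply/AS/(A_itv a c) => //; rewrite !ltW.
Qed.

Lemma connected_image_subsingleton {T : topologicalType} {f : T -> R} {C : set T} {S : set R} :
  continuous f -> connected C -> f @` C `<=` S -> interval_free S ->
  forall x y, C x -> C y -> f x = f y.
Proof.
move=> f_cont C_conn fCS S_free x y Cx Cy.
have fC_itv : is_interval (f @` C).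
  by apply/connected_intervalP/connected_continuous_connected => //; exact: continuous_subspaceT.
by apply: (interval_free_subsingleton S_free fC_itv fCS); [exists x|exists y].
Qed.

Lemma interval_free_scaled_int N :
  interval_free [set x : R | exists z : int, x * 3%:R ^+ N = z%:~R].
Proof.
have p3 : (0 : R) < 3%:R ^+ N by rewrite exprn_gt0 ?ltr0n.
have half : (2%:R * 3%:R ^+ N)^-1 * 3%:R ^+ N = 2%:R^-1 :> R.
  by field; rewrite expf_neq0 ?pnatr_eq0.
move=> a c [za aE] [zc cE] ac; exists (a + (2%:R * 3%:R ^+ N)^-1).
- have zac : (za < zc)%R by rewrite -(ltr_int R) -aE -cE ltr_pM2r.
  have le1 : za%:~R + 1 <= zc%:~R :> R by rewrite -[1]/(1%:~R : R) -intrD ler_int; lia.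
  apply/andP; split; first by rewrite ltrDl invr_gt0 mulr_gt0 ?ltr0n.
  by rewrite -(ltr_pM2r p3) mulrDl half aE cE; lra.
- move=> [z]; rewrite mulrDl half aE => zE.
  suff : (2 * z = 2 * za + 1)%R by lia.
  by apply: (@intr_inj R); rewrite intrD !intrM -zE; lra.
Qed.

Lemma series_digits_scaled_int (B : nat) (d : nat -> int) K : (0 < B)%N ->
  exists z : int, series (fun n => (d n)%:~R * (B%:R ^+ n.+1)^-1) K * B%:R ^+ K = z%:~R :> R.
Proof.
move=> B_gt0; elim: K => [|K [z IH]]; first by exists 0; rewrite series0 mul0r.
exists (z * B%:Z + d K)%R; rewrite seriesSr intrD intrM -IH (_ : B%:Z%:~R = B%:R :> R) // exprSr.
have B_neq0 : B%:R != 0 :> R by rewrite pnatr_eq0 -lt0n.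
by field; rewrite B_neq0 expf_neq0.
Qed.

Lemma cvg_series_select (z : nat -> R) (c q : R) (eps : nat -> bool) :
  0 <= q < 1 -> (forall k, `|z k| <= c * q ^+ k) ->
  cvgn (series (fun k => (eps k)%:R * z k)).
Proof.
move=> /andP[q_ge0 q_lt1] zc.
have c_ge0 : 0 <= c by rewrite -[c]mulr1 -(expr0 q) (le_trans _ (zc 0%N)).
apply: normed_cvg; apply: (@series_le_cvg _ _ (geometric c q)) => [k|k|k|].
- exact: normr_ge0.
- by rewrite /geometric /= mulr_ge0 ?exprn_ge0.
- rewrite /= normrM; apply: le_trans (zc k); rewrite ler_piMl //.
  by case: (eps k); rewrite ?normr1 ?normr0.
- by apply: is_cvg_geometric_series; rewrite ger0_norm.
Qed.

Let four_fifths_itv : 0 <= (4%:R / 5%:R : R) < 1.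
Proof. by apply/andP; split; lra. Qed.

Lemma pow3inv_ge0 n : 0 <= pow3inv R n.
Proof. by rewrite invr_ge0 exprn_ge0. Qed.

Lemma pow3inv_div4_le k : pow3inv R (k %/ 4) <= (4%:R / 5%:R) ^+ k.
Proof.
have /andP[q_ge0 /ltW q_le1] := four_fifths_itv.
apply: (@le_trans _ _ ((4%:R / 5%:R) ^+ (4 * (k %/ 4).+1))); last first.
  by apply: ler_wiXn2l => //; rewrite mulnC ltnW // ltn_ceil.
rewrite /pow3inv exprM -exprVn; apply: lerXn2r; rewrite ?nnegrE ?invr_ge0 ?exprn_ge0 //.
rewrite expr_div_n -!natrX ler_pdivlMr ?ltr0n //.
by rewrite ler_pdivrMl ?ltr0n // -natrM ler_nat.
Qed.

Definition pow6inv (k : nat) : R := (6%:R ^+ k.+1)^-1.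

Lemma xseq_4M n : xseq R (4 * n)%N = 0.
Proof. by rewrite /xseq mulKn // modnMr. Qed.

Lemma xseq_4MD1 n : xseq R (4 * n + 1)%N = pow3inv R n.
Proof. by rewrite /xseq divn_4MD // modn_4MD. Qed.

Lemma xseq_4MD2 n : xseq R (4 * n + 2)%N = 2%:R * pow3inv R n.
Proof. by rewrite /xseq divn_4MD // modn_4MD. Qed.

Lemma xseq_4MD3 n : xseq R (4 * n + 3)%N = 9%:R * pow3inv R n.
Proof. by rewrite /xseq divn_4MD // modn_4MD. Qed.

Lemma yseq_4M n : yseq R (4 * n)%N = pow6inv n.
Proof. by rewrite /yseq mulKn // modnMr. Qed.

Lemma yseq_4MD n r : (0 < r < 4)%N -> yseq R (4 * n + r)%N = - pow6inv n.
Proof. by case/andP=> r0 r4; rewrite /yseq divn_4MD // modn_4MD //; case: r r0 r4. Qed.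

Lemma norm_xseq_le k : `|xseq R k| <= 9%:R * (4%:R / 5%:R) ^+ k.
Proof.
apply: le_trans (ler_wpM2l (ler0n _ 9) (pow3inv_div4_le k)).
have p_ge0 := pow3inv_ge0 (k %/ 4).
rewrite /xseq; case: (k %% 4)%N => [|[|[|r]]] /=.
- by rewrite normr0 mulr_ge0.
- by rewrite ger0_norm // ler_peMl // ler1n.
- by rewrite ger0_norm ?mulr_ge0 // ler_wpM2r // ler_nat.
- by rewrite ger0_norm ?mulr_ge0.
Qed.

Lemma norm_yseq_le k : `|yseq R k| <= (4%:R / 5%:R) ^+ k.
Proof.
apply: le_trans (pow3inv_div4_le k).
have -> : `|yseq R k| = pow6inv (k %/ 4).
  by rewrite /yseq; case: (k %% 4)%N => [|r] /=; rewrite ?normrN ger0_norm // invr_ge0 exprn_ge0.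
by rewrite lef_pV2 ?posrE ?exprn_gt0 ?ltr0n // lerXn2r ?nnegrE ?ler_nat.
Qed.

Lemma cvg_xseries (eps : nat -> bool) : cvgn (series (fun k => (eps k)%:R * xseq R k)).
Proof. exact: cvg_series_select four_fifths_itv norm_xseq_le. Qed.

Lemma cvg_yseries (eps : nat -> bool) : cvgn (series (fun k => (eps k)%:R * yseq R k)).
Proof.
by apply: (@cvg_series_select _ 1 _ eps four_fifths_itv) => k; rewrite mul1r norm_yseq_le.
Qed.

Definition xval (eps : nat -> bool) : R := limn (series (fun k => (eps k)%:R * xseq R k)).

Definition yval (eps : nat -> bool) : R := limn (series (fun k => (eps k)%:R * yseq R k)).

Definition point (eps : nat -> bool) : R * R := (xval eps, yval eps).

Lemma achievement2E : achievement2 (@xseq R) (@yseq R) = range point.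
Proof.
apply/seteqP; split=> [[a b] [eps [/= xa yb]]|_ [eps _ <-]].
  by exists eps => //; rewrite /point /xval /yval (cvg_lim _ xa) // (cvg_lim _ yb).
by exists eps; split; [exact: cvg_xseries | exact: cvg_yseries].
Qed.

Definition xdigit (eps : nat -> bool) (n : nat) : nat :=
  (eps (4 * n + 1) + 2 * eps (4 * n + 2) + 9 * eps (4 * n + 3))%N.

Definition ydigit (eps : nat -> bool) (n : nat) : int :=
  (eps (4 * n)%N)%:Z - (eps (4 * n + 1)%N)%:Z - (eps (4 * n + 2)%N)%:Z - (eps (4 * n + 3)%N)%:Z.

Definition xsum (d : nat -> R) : nat -> R := series (fun n => d n * pow3inv R n).

Definition ysum (b : nat -> int) : nat -> R := series (fun n => (b n)%:~R * pow6inv n).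

Lemma series_4MS (u : nat -> R) m : series u (4 * m.+1)%N =
  series u (4 * m)%N + (u (4 * m)%N + u (4 * m + 1)%N + u (4 * m + 2)%N + u (4 * m + 3)%N).
Proof.
have -> : (4 * m.+1 = (4 * m + 3).+1)%N by lia.
by rewrite seriesSr addnS seriesSr addnS seriesSr addnS seriesSr !addn0 !addrA.
Qed.

Lemma series_xseq_4M eps m :
  series (fun k => (eps k)%:R * xseq R k) (4 * m)%N = xsum (fun n => (xdigit eps n)%:R) m.
Proof.
elim: m => [|m IH]; first by rewrite muln0 /xsum !series0.
rewrite series_4MS IH /xsum seriesSr xseq_4M xseq_4MD1 xseq_4MD2 xseq_4MD3 /xdigit.
by rewrite !natrD; congr (_ + _); ring.
Qed.

Lemma series_yseq_4M eps m :
  series (fun k => (eps k)%:R * yseq R k) (4 * m)%N = ysum (ydigit eps) m.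
Proof.
elim: m => [|m IH]; first by rewrite muln0 /ysum !series0.
rewrite series_4MS IH /ysum seriesSr yseq_4M !yseq_4MD // /ydigit.
by rewrite !intrD !intrN; congr (_ + _); ring.
Qed.

Lemma cvg_xsum_xval eps : xsum (fun n => (xdigit eps n)%:R) @ \oo --> xval eps.
Proof.
have -> : xsum (fun n => (xdigit eps n)%:R) =
    series (fun k => (eps k)%:R * xseq R k) \o (fun m => 4 * m)%N.
  by apply: funext => m /=; rewrite series_xseq_4M.
by apply: cvg_comp; [exact: cvg_mulnl | exact: cvg_xseries].
Qed.

Lemma cvg_ysum_yval eps : ysum (ydigit eps) @ \oo --> yval eps.
Proof.
have -> : ysum (ydigit eps) = series (fun k => (eps k)%:R * yseq R k) \o (fun m => 4 * m)%N.
  by apply: funext => m /=; rewrite series_yseq_4M.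
by apply: cvg_comp; [exact: cvg_mulnl | exact: cvg_yseries].
Qed.

Lemma ysum_scaled_int (b : nat -> int) K : exists z : int, ysum b K * 6%:R ^+ K = z%:~R.
Proof. exact: series_digits_scaled_int. Qed.

Section BaseSixDigits.
Variable b : nat -> int.
Hypothesis b_range : forall n, (-3 <= b n <= 1)%R.

(* The scaled tail T_K satisfies T_K = (T_(K+1) + b_K) / 6, and [-3/5, 1/5] is
   the interval fixed by t |-> (t + [-3, 1]) / 6. *)
Lemma ysum_window K j :
  - (3%:R / 5%:R) <= (ysum b (K + j) - ysum b K) * 6%:R ^+ K <= 1 / 5%:R.
Proof.
elim: j K => [|j IH] K; first by rewrite addn0 subrr mul0r; apply/andP; split; lra.
have /andP[lo hi] := IH K.+1; rewrite -addSnnS.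
have /andP[bK_lo bK_hi] : - 3%:R <= ((b K)%:~R : R) <= 1.
  by have := b_range K; rewrite -!(ler_int R).
set t := ysum b (K.+1 + j) - ysum b K.+1 in lo hi *.
have -> : (ysum b (K.+1 + j) - ysum b K) * 6%:R ^+ K = (t * 6%:R ^+ K.+1 + (b K)%:~R) / 6%:R.
  by rewrite /t /ysum seriesSr /pow6inv exprSr; field; rewrite expf_neq0 ?pnatr_eq0.
by apply/andP; split; rewrite ?ler_pdivlMr ?ler_pdivrMr ?ltr0n //; lra.
Qed.

Lemma ysum_limit_window Y K : ysum b @ \oo --> Y ->
  - (3%:R / 5%:R) <= (Y - ysum b K) * 6%:R ^+ K <= 1 / 5%:R.
Proof.
move=> bY; set f := fun m => (ysum b m - ysum b K) * 6%:R ^+ K.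
have fY : f @ \oo --> (Y - ysum b K) * 6%:R ^+ K.
  by apply: cvgM; [apply: cvgB => //; exact: cvg_cst | exact: cvg_cst].
have f_window : \forall m \near \oo, - (3%:R / 5%:R) <= f m <= 1 / 5%:R.
  by exists K => // m /= Km; rewrite /f -(subnKC Km) ysum_window.
apply/andP; split.
- apply: (closed_cvg _ (@closed_ge R _) _ _ fY).
  by apply: filterS f_window => m /andP[].
- apply: (closed_cvg _ (@closed_le R _) _ _ fY).
  by apply: filterS f_window => m /andP[].
Qed.

End BaseSixDigits.

Lemma ysum_limit_unique {b b' : nat -> int} {Y : R} :
  (forall n, -3 <= b n <= 1)%R -> (forall n, -3 <= b' n <= 1)%R ->
  ysum b @ \oo --> Y -> ysum b' @ \oo --> Y -> b =1 b'.
Proof.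
move=> b_range b'_range bY b'Y.
have ysum_eq K : ysum b K = ysum b' K.
  have [z zE] := ysum_scaled_int b K; have [z' z'E] := ysum_scaled_int b' K.
  have /andP[lo hi] := ysum_limit_window b b_range Y K bY.
  have /andP[lo' hi'] := ysum_limit_window b' b'_range Y K b'Y.
  have p6 : (0 : R) < 6%:R ^+ K by rewrite exprn_gt0 ?ltr0n.
  suff : z = z' by move=> zz'; apply: (mulIf (lt0r_neq0 p6)); rewrite zE z'E zz'.
  apply/eqP; rewrite -subr_eq0; apply/eqP/intr_norm_lt1; rewrite intrB -zE -z'E.
  rewrite ltr_norml; apply/andP; split; nra.
move=> n; have := ysum_eq n.+1; rewrite /ysum !seriesSr -!/(ysum _ n) ysum_eq.
by move=> /addrI /mulIf; rewrite invr_eq0 expf_neq0 ?pnatr_eq0 // => /(_ isT) /intr_inj.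
Qed.

Lemma ysum_limit_gap {b : nat -> int} {Y : R} K (m : int) :
  (forall n, -3 <= b n <= 1)%R -> ysum b @ \oo --> Y -> Y * 6%:R ^+ K != m%:~R + 3%:R / 10%:R.
Proof.
move=> b_range bY; apply/eqP => YK.
have [z zE] := ysum_scaled_int b K.
have := ysum_limit_window b b_range Y K bY; rewrite mulrBl YK zE => /andP[lo hi].
(* m - z + 3/10 lies in [-3/5, 1/5], so the odd integer 2 (m - z) + 1 has norm < 1 *)
suff : (2 * (m - z) + 1 = 0)%R by lia.
apply: intr_norm_lt1; rewrite intrD intrM intrB ltr_norml; apply/andP; split; lra.
Qed.

Lemma ysum_eq0 (b : nat -> int) N : (forall n, (n < N)%N -> b n = 0) -> ysum b N = 0.
Proof.
elim: N => [|N IH] b0; first by rewrite /ysum series0.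
rewrite /ysum seriesSr -/(ysum b N) IH => [|n nN]; last by rewrite b0 // ltnS ltnW.
by rewrite b0 // mul0r addr0.
Qed.

Lemma ydigit_range eps n : (-3 <= ydigit eps n <= 1)%R.
Proof.
rewrite /ydigit; case: (eps (4 * n)%N); case: (eps (4 * n + 1)%N);
  by case: (eps (4 * n + 2)%N); case: (eps (4 * n + 3)%N).
Qed.

Lemma yval_inj {eps eps' : nat -> bool} : yval eps = yval eps' -> ydigit eps =1 ydigit eps'.
Proof.
move=> e; apply: ysum_limit_unique (ydigit_range eps) (ydigit_range eps') (cvg_ysum_yval eps) _.
by rewrite e; exact: cvg_ysum_yval.
Qed.

Lemma yval_gap eps K (m : int) : yval eps * 6%:R ^+ K != m%:~R + 3%:R / 10%:R.
Proof. exact: ysum_limit_gap (ydigit_range eps) (cvg_ysum_yval eps). Qed.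

Lemma yval_eq0 eps : yval eps = 0 <-> forall n, ydigit eps n = 0.
Proof.
split=> [yval0 n|ydigit0].
- have ysum0 : ysum (fun=> 0) = fun=> 0 by apply: funext => K; apply: ysum_eq0.
  apply: (ysum_limit_unique (ydigit_range eps) (b' := fun=> 0) _ (cvg_ysum_yval eps)) => //.
  by rewrite ysum0 yval0; exact: cvg_cst.
- rewrite -(cvg_lim _ (cvg_ysum_yval eps)) //; apply: lim_near_cst => //.
  by near=> K; apply: ysum_eq0 => n _.
Unshelve. all: by end_near.
Qed.

Lemma exists_gap_point {a c : R} : a < c ->
  exists K (m : int), a < (m%:~R + 3%:R / 10%:R) / 6%:R ^+ K < c.
Proof.
move=> ac; have [K K_big] := exists_natpow_gt (2%:R / (c - a)) 6 isT.
have p6 : (0 : R) < 6%:R ^+ K by rewrite exprn_gt0 ?ltr0n.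
move: K_big; rewrite ltr_pdivrMr ?subr_gt0 // => K_big.
exists K, (Num.floor (a * 6%:R ^+ K) + 1)%R.
have := floor_itv (a * 6%:R ^+ K); rewrite !intrD => /andP[fl_le fl_gt].
by apply/andP; split; [rewrite ltr_pdivlMr // | rewrite ltr_pdivrMr //]; nra.
Qed.

Lemma interval_free_range_yval : interval_free (range yval).
Proof.
move=> a c _ _ ac; have [K [m gap]] := exists_gap_point ac.
exists ((m%:~R + 3%:R / 10%:R) / 6%:R ^+ K) => // -[eps _ e].
by have := yval_gap eps K m; rewrite e mulfVK ?eqxx // expf_neq0 ?pnatr_eq0.
Qed.

Lemma xsum_eq (d d' : nat -> R) N : (forall n, (n < N)%N -> d n = d' n) -> xsum d N = xsum d' N.
Proof. by move=> dd'; rewrite /xsum !seriesEord /=; apply: eq_bigr => i _; rewrite dd'. Qed.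

Lemma xsum_stable (d : nat -> R) N m : (forall n, (N <= n)%N -> d n = 0) ->
  (N <= m)%N -> xsum d m = xsum d N.
Proof.
move=> d0; elim: m => [|m IH] Nm; first by rewrite leqn0 in Nm; rewrite (eqP Nm).
have [Nm'|mN] := leqP N m; first by rewrite /xsum seriesSr -/(xsum d m) IH // d0 // mul0r addr0.
by have -> : N = m.+1 by apply/eqP; rewrite eqn_leq Nm mN.
Qed.

Lemma xval_finite eps N : (forall n, (N <= n)%N -> xdigit eps n = 0%N) ->
  xval eps = xsum (fun n => (xdigit eps n)%:R) N.
Proof.
move=> xdigit0; rewrite -(cvg_lim _ (cvg_xsum_xval eps)) //; apply: lim_near_cst => //.
by near=> m; apply: xsum_stable => [n Nn|]; [rewrite xdigit0 | near: m; exists N].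
Unshelve. all: by end_near.
Qed.

Definition digit0129 : set R := [set d | d = 0 \/ d = 1 \/ d = 2%:R \/ d = 9%:R].

Lemma xdigit_ydigit0 eps n : ydigit eps n = 0 -> digit0129 (xdigit eps n)%:R.
Proof.
rewrite /ydigit /xdigit /digit0129 /=.
case: (eps (4 * n)%N); case: (eps (4 * n + 1)%N); case: (eps (4 * n + 2)%N);
  by case: (eps (4 * n + 3)%N) => //= _; do ?[left; done | right].
Qed.

Lemma xdigit_ydigit1 eps n : ydigit eps n = 1 -> xdigit eps n = 0%N.
Proof.
rewrite /ydigit /xdigit; case: (eps (4 * n)%N); case: (eps (4 * n + 1)%N);
  by case: (eps (4 * n + 2)%N); case: (eps (4 * n + 3)%N).
Qed.

(* A nonzero digit d_n is realised by e_0 together with the term of x-weight d_n,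
   so that b_n = 0; a tail block uses e_0 alone, so that b_n = 1 and d_n = 0. *)
Definition encode (d : nat -> R) (tail : nat -> bool) (k : nat) : bool :=
  let n := (k %/ 4)%N in
  if tail n then (k %% 4 == 0)%N else
  match (k %% 4)%N with
  | 0 => d n != 0
  | 1 => d n == 1
  | 2 => d n == 2%:R
  | _ => d n == 9%:R
  end.

Lemma encode_digits {d : nat -> R} tail {n : nat} : digit0129 (d n) ->
  ydigit (encode d tail) n = (tail n)%:Z /\
  (xdigit (encode d tail) n)%:R = if tail n then 0 else d n.
Proof.
rewrite /ydigit /xdigit /encode mulKn // modnMr !divn_4MD // !modn_4MD //.
case: (tail n) => // -[|[|[|]]] ->; rewrite -[0 : R]/(0%:R) -[1 : R]/(1%:R) !eqr_nat //=.
Qed.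

Definition cons_digit (d0 : R) (d : nat -> R) (n : nat) : R := if n is n'.+1 then d n' else d0.

Lemma xsum_cons_window (d0 t : R) d M :
  (t - xsum (cons_digit d0 d) M.+1) * 3%:R ^+ M.+1 = (3%:R * t - d0 - xsum d M) * 3%:R ^+ M.
Proof.
have -> : xsum (cons_digit d0 d) M.+1 = (d0 + xsum d M) / 3%:R.
  rewrite /xsum !seriesEord /= big_ord_recl /= /pow3inv expr1 mulrDl mulr_suml; congr (_ + _).
  by apply: eq_bigr => i _; rewrite exprS invfM; ring.
by rewrite exprS; field.
Qed.

(* Greedy expansion: one of the digits 0, 1, 2 keeps the remainder 3 t - d in
   [0, 9/8] unless 3 t > 25/8, where the two digits 0, 9 do. *)
Lemma approx_window L t : 0 <= t <= 9%:R / 8%:R ->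
  exists d M, [/\ forall n, digit0129 (d n), (L <= M)%N &
    0 <= (t - xsum d M) * 3%:R ^+ M <= 9%:R / 8%:R].
Proof.
elim: L t => [|L IH] t /andP[t_ge0 t_le].
  by exists (fun=> 0), 0%N; split=> // [n|]; [left | rewrite /xsum series0 subr0 expr0 mulr1 t_ge0].
have cons1 d0 : digit0129 d0 -> 0 <= 3%:R * t - d0 <= 9%:R / 8%:R -> exists d M,
    [/\ forall n, digit0129 (d n), (L.+1 <= M)%N & 0 <= (t - xsum d M) * 3%:R ^+ M <= 9%:R / 8%:R].
  move=> d0_digit /IH[d [M [d_digit LM window]]].
  by exists (cons_digit d0 d), M.+1; split=> // [[]|]; rewrite ?xsum_cons_window.
have [t1|t1] := lerP (3%:R * t) (9%:R / 8%:R).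
  by apply: (cons1 0); [left | rewrite subr0 mulr_ge0 ?ler0n].
have [t2|t2] := lerP (3%:R * t) (17%:R / 8%:R).
  by apply: (cons1 1); [right; left | apply/andP; split; lra].
have [t3|t3] := lerP (3%:R * t) (25%:R / 8%:R).
  by apply: (cons1 2%:R); [right; right; left | apply/andP; split; lra].
have /IH[d [M [d_digit LM window]]] : 0 <= 3%:R * (3%:R * t) - 9%:R <= 9%:R / 8%:R.
  by apply/andP; split; lra.
exists (cons_digit 0 (cons_digit 9%:R d)), M.+2; split.
- by case=> [|[|n]] /=; [left | do 3 right | exact: d_digit].
- exact: leqW.
- by rewrite !xsum_cons_window subr0.
Qed.

Let continuous_fst : continuous (fst : R * R -> R).
Proof. by move=> [a b]; exact: cvg_fst. Qed.

Let continuous_snd : continuous (snd : R * R -> R).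
Proof. by move=> [a b]; exact: cvg_snd. Qed.

Lemma connected_component_tail eps N : (forall n, ydigit eps n = (N <= n)%N%:Z) ->
  connected_component (range point) (point eps) = [set point eps].
Proof.
move=> ydigit_tail; set C := connected_component (range point) (point eps).
have C_conn : connected C by exact: component_connected.
have Cp : C (point eps) by apply: connected_component_refl; exists eps.
have y_range : snd @` C `<=` range yval.
  by move=> _ [_ /connected_component_sub [e _ <-] <-]; exists e.
have y_const e : C (point e) -> yval e = yval eps.
  move=> Ce; have := connected_image_subsingleton continuous_snd C_conn y_range.
  by move=> /(_ interval_free_range_yval _ _ Ce Cp).
have x_lattice : fst @` C `<=` [set x | exists z : int, x * 3%:R ^+ N = z%:~R].
  move=> _ [q Cq <-]; have [e _ qe] := connected_component_sub Cq; subst q => /=.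
  rewrite (@xval_finite e N) => [|n Nn]; last first.
    by apply: xdigit_ydigit1; rewrite (yval_inj (y_const e Cq)) ydigit_tail Nn.
  exact: (series_digits_scaled_int 3 (fun n => (xdigit e n)%:Z) N).
apply/seteqP; split=> [q Cq|_ ->] //; have [e _ qe] := connected_component_sub Cq; subst q.
rewrite [point e]/point (y_const e Cq).
have := connected_image_subsingleton continuous_fst C_conn x_lattice (interval_free_scaled_int N).
by move=> /(_ _ _ Cq Cp) /= ->.
Qed.

Lemma slice0_range_point : slice0 (range point) = Sset digit0129 (@pow3inv R).
Proof.
apply/seteqP; split=> [s [eps _ sE]|s [d [d_digit ds]]].
- have [xE yE] : xval eps = s /\ yval eps = 0 by case: sE.
  exists (fun n => (xdigit eps n)%:R); split.
    by move=> n; apply: xdigit_ydigit0; exact: (yval_eq0 eps).1 yE n.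
  by rewrite -xE; exact: cvg_xsum_xval.
- set eps := encode d (fun=> false); exists eps => //.
  have xdigitE : (fun n => (xdigit eps n)%:R) = d.
    by apply: funext => n; rewrite (encode_digits _ (d_digit n)).2.
  have := cvg_xsum_xval eps; rewrite xdigitE => /(cvg_unique _ ds) -> //.
  rewrite /point; congr (_, _); apply: (yval_eq0 eps).2 => n.
  by rewrite (encode_digits _ (d_digit n)).1.
Qed.

Lemma interior_range_point : interior (range point) = set0.
Proof.
apply/seteqP; split=> // q Eq.
have vertical : \forall y \near q.2, range point (q.1, y).
  have pair_cvg : (q.1, y) @[y --> q.2] --> q.
    by case: q {Eq} => a b; exact: (cvg_pair (cvg_cst a) cvg_id).
  exact: pair_cvg Eq.
have [r /= r_gt0 r_sub] := (nbhs_ballP _ _).1 vertical.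
have ball_sub : ball q.2 r `<=` range yval.
  by move=> y /r_sub [e _ eE]; exists e => //; case: eE.
have ball_is_itv : is_interval (ball q.2 r) by rewrite ball_itv; exact: interval_is_interval.
have := interval_free_subsingleton interval_free_range_yval ball_is_itv ball_sub.
move=> /(_ q.2 (q.2 + r / 2%:R)); rewrite ball_itv /= !in_itv /= => centre_eq.
suff : q.2 = q.2 + r / 2%:R by lra.
by apply: centre_eq; apply/andP; split; lra.
Qed.

Lemma isolated_points_near_axis (t e : R) : 0 < t -> t < 9%:R / 8%:R -> 0 < e ->
  exists p, eball (t, 0) e p /\ range point p /\ connected_component (range point) p = [set p].
Proof.
move=> t_gt0 t_lt e_gt0.
have [L L_big] := exists_natpow_gt (2%:R / e) 3 isT.
have t_itv : 0 <= t <= 9%:R / 8%:R by rewrite !ltW.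
have [d [M [d_digit LM x_window]]] := approx_window L t t_itv.
set eps := encode d (fun n => (M <= n)%N).
have ydigitE n : ydigit eps n = (M <= n)%N%:Z := (encode_digits _ (d_digit n)).1.
exists (point eps); split; last split; [|by exists eps|exact: connected_component_tail ydigitE].
have xE : xval eps = xsum d M.
  rewrite (@xval_finite eps M) => [|n Mn]; last by apply: xdigit_ydigit1; rewrite ydigitE Mn.
  by apply: xsum_eq => n nM; rewrite (encode_digits _ (d_digit n)).2 leqNgt nM.
have y_window : - (3%:R / 5%:R) <= yval eps * 6%:R ^+ M <= 1 / 5%:R.
  have := ysum_limit_window _ (ydigit_range eps) _ M (cvg_ysum_yval eps).
  by rewrite ysum_eq0 ?subr0 // => n nM; rewrite ydigitE leqNgt nM.
set u : R := 3%:R ^+ M.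
have u_gt0 : 0 < u by rewrite exprn_gt0 ?ltr0n.
have eu_big : 2%:R < e * u.
  rewrite mulrC -ltr_pdivrMr //; apply: lt_le_trans L_big _.
  by rewrite ler_weXn2l ?ler1n.
have u_le : u <= 6%:R ^+ M by rewrite lerXn2r ?nnegrE ?ler_nat.
have yu_window : - (3%:R / 5%:R) <= yval eps * u <= 1 / 5%:R.
  by have [y_ge0|y_lt0] := lerP 0 (yval eps); apply/andP; split; nra.
rewrite /eball /point /= subr0 xE -(@ltr_pM2r _ (u ^+ 2)) ?exprn_gt0 //.
rewrite mulrDl -!exprMn; move: x_window; rewrite -/u => x_window.
have x_sq : ((xsum d M - t) * u) ^+ 2 <= (9%:R / 8%:R) ^+ 2 by nra.
have y_sq : (yval eps * u) ^+ 2 <= (3%:R / 5%:R) ^+ 2 by nra.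
have e_sq : 2%:R ^+ 2 < (e * u) ^+ 2 by nra.
lra.
Qed.

End AchievementSet.

Theorem mainTheorem8 (R : realType) :
  let E := achievement2 (@xseq R) (@yseq R) in
  [/\ slice0 E = Sset [set d : R | d = 0 \/ d = 1 \/ d = 2%:R \/ d = 9%:R]
                      (@pow3inv R),
      interior E = set0 &
      forall t e : R, 0 < t -> t < 9%:R / 8%:R -> 0 < e ->
        exists p : R * R, eball (t, 0) e p /\ E p /\
          connected_component E p = [set p]].
Proof.
rewrite /= achievement2E; split.
- exact: slice0_range_point.
- exact: interior_range_point.
- exact: isolated_points_near_axis.
Qed.
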